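(* Let $k$ be a field of characteristic zero and $D_2 = k_{+}\{x\}/[x^2]$. Every element of the algebra $D_2[\partial]$ of differential operators over $D_2$ is nilpotent.
   Context: $k\{x\}$ denotes the differential polynomial algebra in one indeterminate: the polynomial algebra $k[x_0,x_1,x_2,\dots]$ (with $x = x_0$) with the $k$-linear derivation satisfying $x_n' = x_{n+1}$. $k_{+}\{x\}$ is its subalgebra (without unity) of differential polynomials with zero constant term; $[x^2]$ is the differential ideal (ideal closed under the derivation) of $k_{+}\{x\}$ generated by $x^2$, and $D_2$ carries the induced derivation $a\mapsto a'$. For a differential algebra $A$, the algebra $A[\partial]$ consists of finite sums $a_n\partial^n+\cdots+a_1\partial+a_0$ with $a_i\in A$, with multiplication determined by associativity and the rule $\partial a = a\partial + a'$ (so $(a\partial^i)(b\partial^j) = \sum_{l=0}^{i}\binom{i}{l} a\, b^{(l)}\partial^{i+j-l}$). *)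

From HB Require Import structures.
From mathcomp Require Import all_boot all_order all_algebra.
From mathcomp Require Import finmap.
From mathcomp Require Import monalg.
Set Implicit Arguments. Unset Strict Implicit. Unset Printing Implicit Defensive.
Import GRing.Theory.
Local Open Scope ring_scope.

Section DiffPoly.
Variable k : fieldType.

(* k{x} = k[x_0, x_1, x_2, ...]: the monoid algebra over k of the commutative
   monomials in countably many variables indexed by nat. *)
Definition kx := {malg k[cmonom nat]}.

Definition xvar (n : nat) : kx := << ucm n >>.
Definition xx : kx := xvar 0.

(* The derivation x_n' = x_{n+1}, extended k-linearly and by the Leibniz rule:
   on a monomial m = prod_i x_i^(m i), m' = sum_i (m i) x^(m - e_i + e_(i+1)). *)
Definition der_monom (m : cmonom nat) : kx :=
  \sum_(i <- finsupp (cmonom_val m))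
     ((cmonom_val m i)%:R *: << mulcm (divcm m (ucm i)) (ucm i.+1) >>).

Definition der (p : kx) : kx :=
  \sum_(m <- msupp p) (p@_m *: der_monom m).

Definition kplus (p : kx) : Prop := p@_(@onecm nat) = 0.

Inductive dideal_x2 : kx -> Prop :=
  | dI_gen : dideal_x2 (xx ^+ 2)
  | dI_add p q : dideal_x2 p -> dideal_x2 q -> dideal_x2 (p + q)
  | dI_scale (c : k) p : dideal_x2 p -> dideal_x2 (c *: p)
  | dI_mul a p : kplus a -> dideal_x2 p -> dideal_x2 (a * p)
  | dI_der p : dideal_x2 p -> dideal_x2 (der p).

(* An element of D_2 = k_+{x}/[x^2] is represented by some p in k_+{x};
   two representatives p, q denote the same element of D_2 iff p - q \in [x^2].
   An element a_n d^n + ... + a_0 of D_2[d] is represented by the sequence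
   [:: a_0; ...; a_n] of representatives in k_+{x}. *)
Definition op_rep (P : seq kx) : Prop := forall i, kplus (nth 0 P i).

(* Multiplication in D_2[d], computed on representatives (the derivation of
   D_2 is induced by der):
   (a d^i)(b d^j) = sum_(l <= i) 'C(i,l) a b^(l) d^(i+j-l). *)
Definition opmul_coef (P Q : seq kx) (n : nat) : kx :=
  \sum_(i < size P) \sum_(j < size Q) \sum_(l < i.+1 | (i + j - l)%N == n)
     ('C(i, l)%:R * nth 0 P i * iter l der (nth 0 Q j)).

Definition opmul (P Q : seq kx) : seq kx :=
  mkseq (opmul_coef P Q) (size P + size Q).

(* P^(n+1) in the (non-unital) algebra D_2[d] *)
Fixpoint oppowS (P : seq kx) (n : nat) : seq kx :=
  match n with
  | 0 => P
  | n'.+1 => opmul P (oppowS P n')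
  end.

Definition op_zero (P : seq kx) : Prop := forall i, dideal_x2 (nth 0 P i).

End DiffPoly.

(* Give x_i the weight i.  A product of n+1 operators of D_2[d] has
   coefficients whose monomials have degree at least n+1 but weight at most
   (n+1)c, where c depends only on the factor: every factor contributes a
   variable, and differentiating l times raises the weight by l.  Hence, for
   n large, each such monomial contains at least 2*3^(2c) variables of index
   at most 2c.  Such monomials vanish in D_2: the element
   d^(2n)(x_0^2) = C(2n,n) x_n^2 + sum_(j <> n) C(2n,j) x_j x_(2n-j) of [x^2]
   lets one trade a factor x_n^2 (char k = 0) for terms x_j x_(2n-j) having a
   variable of index < n, and induction on the index bound B shows that every
   monomial with 2*3^B variables of index at most B lies in [x^2]. *)

From HB Require Import structures.
From mathcomp Require Import all_boot all_order all_algebra.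
From mathcomp Require Import finmap.
From mathcomp Require Import monalg.
From mathcomp Require Import zify.
Set Implicit Arguments. Unset Strict Implicit. Unset Printing Implicit Defensive.
Import GRing.Theory.
Local Open Scope fset_scope.
Local Open Scope ring_scope.

Local Notation "''x_' i" := (xvar _ i) (at level 8, i at level 2, format "''x_' i").

Section Monomials.
Implicit Types (m : cmonom nat) (f g : nat -> nat).

Definition mnmsum f m := (\sum_(i <- finsupp m) f i * m i)%N.

Lemma mnmsumEw f m (d : {fset nat}) : finsupp m `<=` d ->
  mnmsum f m = (\sum_(i <- d) f i * m i)%N.
Proof.
move=> le; rewrite /mnmsum (big_fset_incl _ le) // => i _.
by rewrite -cmE_neq0 negbK => /eqP ->; rewrite muln0.
Qed.

Lemma eq_mnmsum f g m : f =1 g -> mnmsum f m = mnmsum g m.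
Proof. by move=> fg; apply: eq_bigr => i _; rewrite fg. Qed.

Lemma leq_mnmsum f g m : (forall i, f i <= g i)%N -> (mnmsum f m <= mnmsum g m)%N.
Proof. by move=> fg; apply: leq_sum => i _; rewrite leq_mul2r fg orbT. Qed.

Lemma mnmsumD f g m : mnmsum (fun i => f i + g i)%N m = (mnmsum f m + mnmsum g m)%N.
Proof. by rewrite /mnmsum -big_split; apply: eq_bigr => i _; rewrite mulnDl. Qed.

Lemma mnmsumMl c f m : mnmsum (fun i => c * f i)%N m = (c * mnmsum f m)%N.
Proof. by rewrite /mnmsum big_distrr; apply: eq_bigr => i _ /=; rewrite mulnA. Qed.

Lemma mnmsumM f m1 m2 : mnmsum f (mulcm m1 m2) = (mnmsum f m1 + mnmsum f m2)%N.
Proof.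
rewrite {1}/mnmsum mdomD (mnmsumEw f (fsubsetUl _ (finsupp m2))).
rewrite (mnmsumEw f (fsubsetUr (finsupp m1) _)) -big_split.
by apply: eq_bigr => i _; rewrite mulcmE mulnDr.
Qed.

Lemma mnmsumU f i : mnmsum f (ucm i) = f i.
Proof. by rewrite /mnmsum mdomU big_seq_fset1 ucmE eqxx muln1. Qed.

Lemma mnmsum_mdeg m : mnmsum (fun=> 1%N) m = mdeg m.
Proof. by rewrite mdegE; apply: eq_bigr => i _; rewrite mul1n. Qed.

Lemma mnmsum_pred1 j m : mnmsum (fun i => (i == j) : nat) m = m j.
Proof.
have le : finsupp m `<=` j |` finsupp m by rewrite fsubsetU1.
rewrite (mnmsumEw _ le) (big_fsetD1 j (fset1U1 _ _)) /= eqxx mul1n.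
rewrite big1_fset ?addn0 // => i; rewrite in_fsetD1 => /andP[/negbTE -> _] _.
by rewrite mul0n.
Qed.

Definition cnt_le (B : nat) (m : cmonom nat) := mnmsum (fun i => (i <= B) : nat) m.

Definition dweight (m : cmonom nat) := mnmsum id m.

Lemma cnt_le0 m : cnt_le 0 m = m 0%N.
Proof. by rewrite -mnmsum_pred1; apply: eq_mnmsum => i; rewrite leqn0. Qed.

Lemma cnt_leS B m : cnt_le B.+1 m = (cnt_le B m + m B.+1)%N.
Proof.
rewrite -mnmsum_pred1 -mnmsumD; apply: eq_mnmsum => i.
by rewrite [in LHS]leq_eqVlt ltnS addnC; case: eqP => [->|]; rewrite ?ltnn.
Qed.

Lemma cnt_le_dweight B m : (B.+1 * (mdeg m - cnt_le B m) <= dweight m)%N.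
Proof.
have -> : (mdeg m - cnt_le B m = mnmsum (fun i => (B < i) : nat) m)%N.
  rewrite -mnmsum_mdeg (@eq_mnmsum _ (fun i => (i <= B) + (B < i))%N) ?mnmsumD ?addKn //.
  by move=> i; case: leqP.
rewrite -mnmsumMl; apply: leq_mnmsum => i.
by case: ltnP => //= ?; rewrite ?muln1 ?muln0.
Qed.

Lemma divcmUK i m : (0 < m i)%N -> mulcm (divcm m (ucm i)) (ucm i) = m.
Proof.
move=> mi; apply/eqP/cmP => l; rewrite mulcmE divcmE ucmE.
by case: eqP => [<-|_]; rewrite ?subn0 ?addn0 // subn1 addn1 prednK.
Qed.

Lemma divcm_mulUl j m : divcm (mulcm (ucm j) m) (ucm j) = m.
Proof. by apply/eqP/cmP => l; rewrite divcmE mulcmE addKn. Qed.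

Lemma divcm_mulU j i m : (0 < m i)%N ->
  divcm (mulcm (ucm j) m) (ucm i) = mulcm (ucm j) (divcm m (ucm i)).
Proof.
move=> mi; apply/eqP/cmP => l; rewrite !(mulcmE, divcmE, ucmE).
by case: (eqVneq i l) => [<-|_]; rewrite ?subn0 // addnBA.
Qed.

Lemma cnt_le_mulUU B j r : j != B.+1 -> (j <= B.+1 + B.+1)%N ->
  (cnt_le B r < cnt_le B (mulcm r (mulcm (ucm j) (ucm (B.+1 + B.+1 - j)))))%N.
Proof.
move=> ne_j le_j; rewrite /cnt_le !mnmsumM !mnmsumU -[X in (X < _)%N]addn0 ltn_add2l.
case: (leqP j B) => // lt_Bj.
by have -> : (B.+1 + B.+1 - j <= B)%N by lia.
Qed.

Lemma cnt_le_mdeg B m : (cnt_le B m <= mdeg m)%N.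
Proof. by rewrite /cnt_le -mnmsum_mdeg; apply: leq_mnmsum => i; case: (i <= B)%N. Qed.

Lemma mnmsum_shiftU f i m : (0 < m i)%N ->
  (mnmsum f (mulcm (divcm m (ucm i)) (ucm i.+1)) + f i = mnmsum f m + f i.+1)%N.
Proof.
by move=> mi; rewrite -[in RHS](divcmUK mi) !mnmsumM !mnmsumU addnAC.
Qed.
End Monomials.

Section Derivation.
Variable k : fieldType.
Local Notation kx := (kx k).
Local Notation der := (@der k).
Implicit Types (p q : kx) (m : cmonom nat).

Lemma derEw (p : kx) (d : {fset cmonom nat}) : msupp p `<=` d ->
  der p = \sum_(m <- d) p@_m *: der_monom k m.
Proof.
move=> le; rewrite /der (big_fset_incl _ le) // => m _ /mcoeff_outdom ->.
by rewrite scale0r.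
Qed.

Lemma der_is_linear : linear der.
Proof.
move=> c p q; have le := fsubsetUl (msupp p) (msupp q).
rewrite (@derEw (c *: p + q) (msupp p `|` msupp q)); last first.
  by rewrite (fsubset_trans (msuppD_le _ _)) // fsetSU // msuppZ_le.
rewrite (derEw le) (derEw (fsubsetUr (msupp p) (msupp q))) scaler_sumr -big_split /=.
by apply: eq_bigr => m _; rewrite mcoeffD mcoeffZ scalerDl scalerA.
Qed.

HB.instance Definition _ := GRing.isLinear.Build k kx kx *:%R der der_is_linear.

Lemma derU m : der << m >> = der_monom k m.
Proof. by rewrite /der msuppU1 big_seq_fset1 mcoeffUU scale1r. Qed.

Lemma malgUM m1 m2 : << m1 >> * << m2 >> = << mulcm m1 m2 >> :> kx.
Proof. by rewrite malgM_def fgmulUU mulr1. Qed.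

Lemma malgUZ (c : k) m : << c *g m >> = c *: << m >> :> kx.
Proof. by rewrite -mul_malgC malgM_def fgmulUU mulr1 Monoid.mul1m. Qed.

Lemma der_monomEw m (d : {fset nat}) : finsupp m `<=` d ->
  der_monom k m = \sum_(i <- d) (m i)%:R *: << mulcm (divcm m (ucm i)) (ucm i.+1) >>.
Proof.
move=> le; rewrite /der_monom (big_fset_incl _ le) // => i _.
by rewrite -cmE_neq0 negbK => /eqP ->; rewrite scale0r.
Qed.

(* Rewrites on concrete elements of [kx] are confined to one side of the goal
   (and closed by [congr] rather than conversion): a failed unification
   between distinct monomials unfolds the monoid-algebra operations, which is
   prohibitively slow. *)
Lemma der_monom_termU j m i :
  ((mulcm (ucm j) m) i)%:R *: << mulcm (divcm (mulcm (ucm j) m) (ucm i)) (ucm i.+1) >> =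
  (j == i)%:R *: << mulcm (divcm (mulcm (ucm j) m) (ucm i)) (ucm i.+1) >> +
  << ucm j >> * ((m i)%:R *: << mulcm (divcm m (ucm i)) (ucm i.+1) >>) :> kx.
Proof.
rewrite mulcmE ucmE natrD scalerDl; congr (_ + _).
case: (posnP (m i)) => [mi0|mi].
  by rewrite mi0 [in LHS]scale0r [in RHS]scale0r mulr0.
by rewrite divcm_mulU // -mulcmA -malgUM scalerAr.
Qed.

Lemma der_monomU j m :
  der_monom k (mulcm (ucm j) m) = << mulcm m (ucm j.+1) >> + << ucm j >> * der_monom k m.
Proof.
have le_jm : finsupp (mulcm (ucm j) m) `<=` j |` finsupp m by rewrite mdomD mdomU.
have le_m : finsupp m `<=` j |` finsupp m by rewrite fsubsetU1.
rewrite (der_monomEw le_jm) (der_monomEw le_m) mulr_sumr.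
rewrite (eq_bigr _ (fun i _ => der_monom_termU j m i)).
rewrite big_split /= (big_fsetD1 j) ?fset1U1 //= eqxx scale1r divcm_mulUl.
rewrite big1_fset ?addr0 // => i; rewrite in_fsetD1 => /andP[ne_ij _] _.
by rewrite eq_sym (negbTE ne_ij) scale0r.
Qed.

Lemma der_monomU1 a : der_monom k (ucm a) = << ucm a.+1 >>.
Proof.
have der_monom1 : der_monom k (@onecm nat) = 0 by rewrite /der_monom mdom1 big_seq_fset0.
by rewrite -[ucm a]mulcm0 der_monomU der_monom1 mulr0 addr0 mul0cm; congr << _ >>.
Qed.

Lemma der_xvarM a b : der ('x_a * 'x_b) = 'x_a.+1 * 'x_b + 'x_a * 'x_b.+1.
Proof.
rewrite /xvar [in LHS]malgUM derU der_monomU der_monomU1 [X in _ + X = _]malgUM.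
by rewrite [X in _ = X + _]malgUM [X in _ = _ + X]malgUM [mulcm (ucm b) _]mulcmC.
Qed.

Lemma sum_binS (V : nmodType) N (F : nat -> V) :
  \sum_(j < N.+2) F j *+ 'C(N.+1, j) =
  \sum_(j < N.+1) F j.+1 *+ 'C(N, j) + \sum_(j < N.+1) F j *+ 'C(N, j).
Proof.
rewrite big_ord_recl [X in _ = _ + X]big_ord_recl /= !bin0 !mulr1n.
under eq_bigr => i _ do rewrite binS mulrnDr.
rewrite big_split /= big_ord_recr /= bin_small // mulr0n addr0.
by rewrite addrA addrC.
Qed.

Lemma iter_der_xvarM N a b : iter N der ('x_a * 'x_b) =
  \sum_(j < N.+1) ('x_(a + j) * 'x_(b + (N - j))) *+ 'C(N, j).
Proof.
elim: N => [|N IH]; first by rewrite big_ord1 !addn0.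
rewrite iterS IH linear_sum (@sum_binS _ N (fun j => 'x_(a + j) * 'x_(b + (N.+1 - j)))) /=.
rewrite -big_split /=; apply: eq_bigr => j _.
rewrite raddfMn /= der_xvarM subSS subSn ?mulrnDl ?addnS //.
by rewrite -ltnS.
Qed.
End Derivation.

Section Ideal.
Variable k : fieldType.
Local Notation kx := (kx k).
Local Notation der := (@der k).
Hypothesis char0 : [pchar k] =i pred0.
Local Notation I := (@dideal_x2 k).
Implicit Types (p q : kx) (m : cmonom nat).

Lemma dideal0 : I 0.
Proof. by rewrite -(scale0r (xx k ^+ 2)); apply/dI_scale/dI_gen. Qed.

Lemma didealB p q : I p -> I q -> I (p - q).
Proof. by move=> Ip Iq; rewrite -scaleN1r; apply/dI_add/dI_scale. Qed.

Lemma didealMn p n : I p -> I (p *+ n).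
Proof. by move=> Ip; rewrite -scaler_nat; apply: dI_scale. Qed.

Lemma dideal_sum (J : Type) (r : seq J) (P : pred J) (F : J -> kx) :
  (forall j, P j -> I (F j)) -> I (\sum_(j <- r | P j) F j).
Proof. by move=> IF; apply: (big_ind I dideal0 (@dI_add k)). Qed.

Lemma dideal_mull a p : I p -> I (a * p).
Proof.
move=> Ip; rewrite -[a](subrK (a@_(@onecm nat))%:MP) mulrDl.
apply: dI_add; last by rewrite mul_malgC; apply: dI_scale.
by apply: dI_mul Ip; rewrite /kplus mcoeffB mcoeffC eqxx mulr1n subrr.
Qed.

Lemma dideal_mulr p a : I p -> I (p * a).
Proof. by rewrite mulrC; apply: dideal_mull. Qed.

Lemma dideal_iter_der N p : I p -> I (iter N der p).
Proof. by move=> Ip; elim: N => //= N; apply: dI_der. Qed.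

Lemma dideal_monomials p : (forall m, m \in msupp p -> I << m >>) -> I p.
Proof.
move=> Ip; rewrite [p]monalgE big_seq; apply: dideal_sum => m /Ip Im.
by rewrite malgUZ; apply: dI_scale.
Qed.

Lemma malgU_factor_xvar n t m : (t <= m n)%N ->
  exists r : cmonom nat, << m >> = 'x_n ^+ t * << r >> :> kx.
Proof.
elim: t m => [|t IH] m le_t; first by exists m; rewrite expr0 mul1r.
have mn : (0 < m n)%N by apply: leq_trans le_t.
have [|r Er] := IH (divcm m (ucm n)); first by rewrite divcmE ucmE eqxx subn1 -ltnS prednK.
exists r; rewrite -(divcmUK mn) -malgUM Er /xvar exprSr.
exact: mulrAC.
Qed.

Lemma iter_der_xvar0_sqr n : iter (n + n) der ('x_0 * 'x_0) =
  'x_n * 'x_n *+ 'C(n + n, n) +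
  \sum_(j < (n + n).+1 | j != n :> nat) ('x_j * 'x_(n + n - j)) *+ 'C(n + n, j) :> kx.
Proof.
have lt_n : (n < (n + n).+1)%N by rewrite ltnS leq_addr.
rewrite iter_der_xvarM (bigD1 (Ordinal lt_n)) /=; last by [].
by rewrite add0n addnK; congr (_ + _).
Qed.

Lemma mulrn_solve (R : lalgType k) N (y S Q : R) : (N%:R : k) != 0 ->
  y * Q = (N%:R)^-1 *: ((y *+ N + S) * Q - S * Q).
Proof.
by move=> N0; rewrite mulrDl addrK mulrnAl -scaler_nat scalerA mulVf ?scale1r.
Qed.

Lemma dideal_sqr_xvarX B e :
    (forall m, (e <= cnt_le B m)%N -> I << m >>) ->
  forall t r, (e <= cnt_le B r + t)%N -> I (('x_B.+1 * 'x_B.+1) ^+ t * << r >>).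
Proof.
move=> IB; elim=> [|t IHt] r le_e.
  by rewrite expr0 mul1r; apply: IB; rewrite addn0 in le_e.
set n := B.+1; rewrite exprS -mulrA; set Q := (_ ^+ t * _).
pose S : kx := \sum_(j < (n + n).+1 | j != n :> nat) ('x_j * 'x_(n + n - j)) *+ 'C(n + n, j).
have C0 : ('C(n + n, n)%:R : k) != 0.
  by rewrite ((pcharf0P _).1 char0) -lt0n bin_gt0 leq_addr.
rewrite (mulrn_solve _ S _ C0) -iter_der_xvar0_sqr; apply/dI_scale/didealB.
  by apply/dideal_mulr/dideal_iter_der; rewrite -expr2; exact: dI_gen.
rewrite /S mulr_suml; apply: dideal_sum => j ne_jn; rewrite mulrnAl; apply: didealMn.
have le_j : (j <= n + n)%N by rewrite -ltnS.
have -> : 'x_j * 'x_(n + n - j) * Q =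
    ('x_n * 'x_n) ^+ t * << mulcm r (mulcm (ucm (j : nat)) (ucm (n + n - j)%N)) >> :> kx.
  by rewrite /Q /xvar -malgUM -malgUM [LHS]mulrC -[LHS]mulrA.
apply: IHt; apply: leq_trans le_e _; rewrite addnS ltn_add2r.
exact: cnt_le_mulUU.
Qed.

Lemma dideal_cnt_le B m : (2 * 3 ^ B <= cnt_le B m)%N -> I << m >>.
Proof.
elim: B m => [|B IB] m.
  rewrite cnt_le0 muln1 => /malgU_factor_xvar[r ->].
  by apply: dideal_mulr; exact: dI_gen.
case: (leqP (2 * 3 ^ B) (cnt_le B m)) => [/IB //|lt_m].
rewrite cnt_leS expnS => le_m.
have /malgU_factor_xvar[r ->] : (2 * (2 * 3 ^ B) <= m B.+1)%N by lia.
rewrite exprM [X in X ^+ _]expr2.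
by apply: (dideal_sqr_xvarX IB); rewrite leq_addl.
Qed.
End Ideal.

Section DegreeWeight.
Variable k : fieldType.
Local Notation kx := (kx k).
Local Notation der := (@der k).
Implicit Types (p q : kx) (m : cmonom nat).

Definition degw_bounded (N W : nat) p :=
  forall m, m \in msupp p -> (N <= mdeg m)%N /\ (dweight m <= W)%N.

Lemma degw_bounded0 N W : degw_bounded N W 0.
Proof. by move=> m; rewrite msupp0 inE. Qed.

Lemma degw_boundedD N W p q :
  degw_bounded N W p -> degw_bounded N W q -> degw_bounded N W (p + q).
Proof.
move=> bp bq m /(fsubsetP (msuppD_le p q)); rewrite in_fsetU.
by case/orP; [apply: bp | apply: bq].
Qed.

Lemma degw_boundedZ N W (c : k) p : degw_bounded N W p -> degw_bounded N W (c *: p).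
Proof. by move=> bp m /(fsubsetP (msuppZ_le c p)); apply: bp. Qed.

Lemma degw_boundedMn N W p n : degw_bounded N W p -> degw_bounded N W (p *+ n).
Proof. by move=> bp m /(fsubsetP (msuppMn_le p n)); apply: bp. Qed.

Lemma degw_bounded_sum N W (J : Type) (r : seq J) (P : pred J) (F : J -> kx) :
  (forall j, P j -> degw_bounded N W (F j)) ->
  degw_bounded N W (\sum_(j <- r | P j) F j).
Proof. by move=> bF; apply: big_ind => //; [apply: degw_bounded0 | apply: degw_boundedD]. Qed.

Lemma degw_bounded_le N W N' W' p :
  degw_bounded N W p -> (N' <= N)%N -> (W <= W')%N -> degw_bounded N' W' p.
Proof.
move=> bp le_N le_W m /bp[dm wm].
by split; [apply: leq_trans dm | apply: leq_trans le_W].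
Qed.

Lemma degw_boundedM N1 W1 N2 W2 p q :
  degw_bounded N1 W1 p -> degw_bounded N2 W2 q ->
  degw_bounded (N1 + N2) (W1 + W2) (p * q).
Proof.
move=> bp bq m /msuppM_le[m1 [m2 [/bp[d1 w1] /bq[d2 w2] ->]]].
by rewrite mdegM /dweight mnmsumM; split; apply: leq_add.
Qed.

Lemma degw_boundedU N W m : (N <= mdeg m)%N -> (dweight m <= W)%N ->
  degw_bounded N W << m >>.
Proof. by move=> dm wm m' /(fsubsetP msuppU_le); rewrite inE => /eqP ->. Qed.

Lemma degw_bounded_der N W p : degw_bounded N W p -> degw_bounded N W.+1 (der p).
Proof.
move=> bp; apply: degw_bounded_sum => m _.
case: (boolP (m \in msupp p)) => [/bp[dm wm]|/mcoeff_outdom ->]; last first.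
  by rewrite scale0r; apply: degw_bounded0.
apply/degw_boundedZ/degw_bounded_sum => i _.
case: (posnP (m i)) => [->|mi]; first by rewrite scale0r; apply: degw_bounded0.
apply/degw_boundedZ/degw_boundedU.
  by rewrite -mnmsum_mdeg -(leq_add2r 1) mnmsum_shiftU // mnmsum_mdeg leq_add2r.
by rewrite -(leq_add2r i) /dweight mnmsum_shiftU // addnS addSn ltnS leq_add2r.
Qed.

Lemma degw_bounded_iter_der N W l p :
  degw_bounded N W p -> degw_bounded N (W + l) (iter l der p).
Proof.
by move=> bp; elim: l => [|l IHl]; rewrite ?addn0 // addnS; apply: degw_bounded_der.
Qed.
End DegreeWeight.

Section Operators.
Variable k : fieldType.
Local Notation kx := (kx k).
Implicit Types (P Q : seq kx).

Lemma degw_bounded_opmul P Q w N W :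
    (forall i, degw_bounded 1 w (nth 0 P i)) ->
    (forall i, degw_bounded N W (nth 0 Q i)) ->
  forall i, degw_bounded N.+1 (w + W + size P) (nth 0 (opmul P Q) i).
Proof.
move=> bP bQ i; rewrite /opmul.
have [lt_i|ge_i] := ltnP i (size P + size Q); last first.
  by rewrite nth_default ?size_mkseq //; apply: degw_bounded0.
rewrite nth_mkseq //; apply: degw_bounded_sum => a _.
apply: degw_bounded_sum => b _; apply: degw_bounded_sum => l _.
rewrite -mulrA mulr_natl; apply: degw_boundedMn.
apply: (degw_bounded_le (degw_boundedM (bP a) (degw_bounded_iter_der (l := l) (bQ b)))) => //.
by rewrite -addnA !leq_add2l; apply/ltnW/(leq_trans (ltn_ord l)).
Qed.

Lemma degw_bounded_oppowS P w : (forall i, degw_bounded 1 w (nth 0 P i)) ->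
  forall n i, degw_bounded n.+1 (n.+1 * (w + size P)) (nth 0 (oppowS P n) i).
Proof.
move=> bP; elim=> [|n IHn] i /=.
  by apply: (degw_bounded_le (bP i)); rewrite // mul1n leq_addr.
apply: (degw_bounded_le (degw_bounded_opmul (i := i) bP IHn)) => //.
by rewrite [X in (_ <= X)%N]mulSn; lia.
Qed.

Lemma op_rep_degw_bounded P : op_rep P ->
  exists w, forall i, degw_bounded 1 w (nth 0 P i).
Proof.
move=> HP; exists (\max_(p <- P) \max_(m <- msupp p) dweight m) => i m mp; split.
  rewrite lt0n mdeg_eq0; apply: contraTneq mp => ->.
  by rewrite -mcoeff_neq0 (HP i) eqxx.
have [lt_i|ge_i] := ltnP i (size P); last by move: mp; rewrite nth_default // msupp0 inE.
apply: leq_trans (leq_bigmax_seq _ (mem_nth 0 lt_i) isT).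
exact: leq_bigmax_seq mp isT.
Qed.

Lemma dideal_degw_bounded (char0 : [pchar k] =i pred0) c N (p : kx) :
  (4 * 3 ^ (2 * c) <= N)%N -> degw_bounded N (N * c) p -> dideal_x2 p.
Proof.
move=> le_N bp; apply: dideal_monomials => m /bp[dm wm].
apply: (dideal_cnt_le char0 (B := 2 * c)).
have := cnt_le_dweight (2 * c) m; have := cnt_le_mdeg (2 * c) m.
nia.
Qed.
End Operators.

Theorem mainTheorem7 (k : fieldType) (char0 : [pchar k] =i pred0)
    (P : seq (kx k)) (HP : op_rep P) :
  exists n : nat, op_zero (oppowS P n).
Proof.
have [w bP] := op_rep_degw_bounded HP.
set c := (w + size P)%N; exists (4 * 3 ^ (2 * c))%N => i.
apply: (dideal_degw_bounded char0 (c := c) (leqnSn _)).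
exact: degw_bounded_oppowS.
Qed.
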